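(* Let $C(17)$ be the Pless symmetry code of length $36$ and $U$ the set of its codewords of weight $36$, viewed as $\pm1$ vectors by replacing each entry $2$ with $-1$. If $H$ is a Hadamard matrix of order $36$ whose rows are codewords from $U$, then the row set of any normalized Hadamard matrix obtained from $H$ (by negating rows and columns of $H$) is contained in a ternary code which is monomially equivalent to $C(17)$.
   Context: Let $\chi$ be the quadratic character of $GF(17)$ ($\chi(0)=0$, $\chi(a)=1$ for nonzero squares, $-1$ otherwise), $Q$ the $17\times17$ matrix with $Q_{ij}=\chi(j-i)$, and $S_{18}=\begin{pmatrix}0&\mathbf 1^T\\ \mathbf 1& Q\end{pmatrix}$ read over $GF(3)$. The Pless symmetry code $C(17)$ is the ternary code of length $36$ generated by $[I_{18}\mid S_{18}]$. A Hadamard matrix is normalized if all entries of its first row and first column equal $1$; a $\pm1$ vector is identified with a ternary vector via $-1\mapsto 2$, so negating a row corresponds to multiplying the codeword by $2$. Two ternary codes are monomially equivalent if one is obtained from the other by a permutation of coordinates followed by multiplying some coordinates by $2$. *)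

From HB Require Import structures.
From mathcomp Require Import all_boot all_order all_algebra all_fingroup.
Set Implicit Arguments. Unset Strict Implicit. Unset Printing Implicit Defensive.
Import GRing.Theory.
Local Open Scope ring_scope.

Definition qchi17 (a : 'F_17) : 'F_3 :=
  if a == 0 then 0 else if [exists b : 'F_17, b * b == a] then 1 else -1.

(* S_18 = [0 1^T; 1 Q], Q_{ij} = chi(j - i); index 0 is the border,
   index k >= 1 corresponds to the element k-1 of GF(17). *)
Definition S18 : 'M['F_3]_18 :=
  \matrix_(i < 18, j < 18)
    if (i == 0 :> nat) && (j == 0 :> nat) then 0
    else if (i == 0 :> nat) || (j == 0 :> nat) then 1
    else qchi17 ((j.-1)%:R - (i.-1)%:R).

Definition G17 : 'M['F_3]_(18, 36) := row_mx 1%:M S18.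

Definition C17 (v : 'rV['F_3]_36) : Prop := (v <= G17)%MS.

Definition U17 (v : 'rV['F_3]_36) : Prop := C17 v /\ [forall j, v 0 j != 0].

Definition to_F3 (v : 'rV[int]_36) : 'rV['F_3]_36 := map_mx (fun z : int => z%:~R) v.

Definition pm1 (z : int) : bool := (z == 1) || (z == -1).

Definition hadamard36 (H : 'M[int]_36) : Prop :=
  (forall i j, pm1 (H i j)) /\ H *m H^T = 36%:M.

Definition normalized36 (H : 'M[int]_36) : Prop :=
  forall k, H 0 k = 1 /\ H k 0 = 1.

Definition negate_rc (r c : 'I_36 -> int) (H : 'M[int]_36) : 'M[int]_36 :=
  \matrix_(i, j) (r i * H i j * c j).

Definition mon_image (s : 'S_36) (d : 'I_36 -> 'F_3) (C : 'rV['F_3]_36 -> Prop)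
  (v : 'rV['F_3]_36) : Prop :=
  exists2 w, C w & v = \row_j (d j * w 0 (s j)).

Definition monomially_equivalent_to (D C : 'rV['F_3]_36 -> Prop) : Prop :=
  exists (s : 'S_36) (d : 'I_36 -> 'F_3),
    (forall j, d j != 0) /\ (forall v, D v <-> mon_image s d C v).

From HB Require Import structures.
From mathcomp Require Import all_boot all_order all_algebra all_fingroup.
Import GRing.Theory.
Local Open Scope ring_scope.

(* Negating a row multiplies the corresponding codeword by the unit [-1], which
   keeps it in the linear code C(17); negating columns is the monomial
   transformation with identity permutation and the column signs as
   multipliers.  So the code C(17) twisted by the column signs contains every
   row of the normalized matrix. *)

Lemma pm1_intr_neq0 (R : nzRingType) (z : int) : pm1 z -> z%:~R != 0 :> R.
Proof. by case/orP=> /eqP ->; rewrite ?oppr_eq0 oner_eq0. Qed.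

Lemma mon_image_equivalent (s : 'S_36) (d : 'I_36 -> 'F_3)
    (C : 'rV['F_3]_36 -> Prop) :
  (forall j, d j != 0) -> monomially_equivalent_to (mon_image s d C) C.
Proof. by move=> d_neq0; exists s, d. Qed.

Lemma negate_rc_row_mon_image (C : 'rV['F_3]_36 -> Prop)
    (r c : 'I_36 -> int) (H : 'M[int]_36) (i : 'I_36) :
  C ((r i)%:~R *: to_F3 (row i H)) ->
  mon_image 1%g (fun j => (c j)%:~R) C (to_F3 (row i (negate_rc r c H))).
Proof.
move=> C_ri; exists ((r i)%:~R *: to_F3 (row i H)) => //.
by apply/rowP=> j; rewrite !mxE perm1 !intrM mulrC mulrA.
Qed.

Theorem lemma2 (H : 'M[int]_36) :
  hadamard36 H ->
  (forall i, U17 (to_F3 (row i H))) ->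
  forall r c : 'I_36 -> int,
    (forall i, pm1 (r i)) -> (forall j, pm1 (c j)) ->
    normalized36 (negate_rc r c H) ->
    exists D : 'rV['F_3]_36 -> Prop,
      monomially_equivalent_to D C17 /\
      (forall i, D (to_F3 (row i (negate_rc r c H)))).
Proof.
move=> _ rowsU r c _ c_pm1 _.
pose d j : 'F_3 := (c j)%:~R.
exists (mon_image 1%g d C17); split.
  by apply: mon_image_equivalent => j; apply: pm1_intr_neq0.
move=> i; apply: negate_rc_row_mon_image.
by apply: scalemx_sub; case: (rowsU i).
Qed.
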